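(* Let $\mathcal X,\mathcal Y$ be complex Hilbert spaces and $A:\mathcal X\supset\operatorname{dom}A\to\mathcal Y$ a closed, densely defined linear operator with $\|Ax\|_{\mathcal Y}\ge c\|x\|_{\mathcal X}$ for some $c>0$ and all $x\in\operatorname{dom}A$. Let $\mathcal X_h$ be $\operatorname{dom}A$ with inner product $\langle x,y\rangle_{\mathcal X_h}=\langle Ax,Ay\rangle_{\mathcal Y}$ and $\mathcal Z_h=\mathcal X_h\times\mathcal X$ with the product inner product. Let $B:\mathcal Y\supset\operatorname{dom}B\to\mathcal X$ be closed, densely defined, with $A^*\subset-B$, and define $\mathcal A$ on $\mathcal Z_h$ by $\operatorname{dom}\mathcal A=\{(z_1,z_2)\in\mathcal X_h\times\mathcal X_h: Az_1\in\operatorname{dom}B\}$, $\mathcal A(z_1,z_2)=(z_2,BAz_1)$. Let $\mathcal G_1,\mathcal G_2$ be Hilbert spaces and let $\Lambda=(\Lambda_1,\Lambda_2):\operatorname{dom}A\to\mathcal G_1\times\mathcal G_2^*$ and $\Pi=(\Pi_1,\Pi_2):\operatorname{dom}B\to\mathcal G_1^*\times\mathcal G_2$ be linear maps forming a boundary triplet for the dual pair $(A^*,-B^* )$, i.e. $\Lambda$ and $\Pi$ are surjective and $-\langle By,x\rangle_{\mathcal X}-\langle y,Ax\rangle_{\mathcal Y}=\langle\Pi_1y,\Lambda_1x\rangle_{\mathcal G_1^*,\mathcal G_1}-\langle\Pi_2y,\Lambda_2x\rangle_{\mathcal G_2,\mathcal G_2^*}$ for all $y\in\operatorname{dom}B$,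 $x\in\operatorname{dom}A$. Let $\mathcal G:=\mathcal G_1\times\mathcal G_2$, $\mathcal G^*=\mathcal G_1^*\times\mathcal G_2^*$, and define on $\operatorname{dom}\mathcal A$ $\Gamma_0(z_1,z_2)=(\Lambda_1z_2,\ \Pi_2Az_1)\in\mathcal G$, $\Gamma_1(z_1,z_2)=(-\Pi_1Az_1,\ \Lambda_2z_2)\in\mathcal G^*$. Then $(\mathcal G,\Gamma_0,\Gamma_1)$ is a boundary triplet for $\mathcal A$: the map $(\Gamma_0,\Gamma_1):\operatorname{dom}\mathcal A\to\mathcal G\times\mathcal G^*$ is surjective and $\langle\mathcal Af,g\rangle_{\mathcal Z_h}+\langle f,\mathcal Ag\rangle_{\mathcal Z_h}=\langle\Gamma_1f,\Gamma_0g\rangle_{\mathcal G^*,\mathcal G}+\langle\Gamma_0f,\Gamma_1g\rangle_{\mathcal G,\mathcal G^*}$ for all $f,g\in\operatorname{dom}\mathcal A$.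
   Context: All Hilbert spaces are complex. For a Hilbert space $\mathcal H$, $\mathcal H^*$ denotes its anti-dual (bounded conjugate-linear functionals), $\langle\cdot,\cdot\rangle_{\mathcal H^*,\mathcal H}$ the duality pairing and $\langle h,\phi\rangle_{\mathcal H,\mathcal H^*}:=\overline{\langle\phi,h\rangle_{\mathcal H^*,\mathcal H}}$. The dual-pair relation $A^*\subset-B$ is equivalent to $B^*\subset -A$. It is known that $\mathcal A$ is closed, densely defined and $\mathcal A^*\subset-\mathcal A$, so that $\mathcal A$ is the adjoint of the closed densely defined skew-symmetric operator $\mathcal A^*$. *)

From HB Require Import structures.
From mathcomp Require Import all_boot all_order all_algebra.
From mathcomp Require Import reals complex.
Set Implicit Arguments. Unset Strict Implicit. Unset Printing Implicit Defensive.
Import Order.TTheory GRing.Theory Num.Theory.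
Local Open Scope ring_scope.
Local Open Scope complex_scope.

Section Hilbert.
Variable R : realType.
Local Notation C := R[i].

(* Norm induced by an inner product; it is a nonnegative real, viewed in C. *)
Definition hnorm (V : lmodType C) (ip : V -> V -> C) (x : V) : C := sqrtC (ip x x).

Definition hconv (V : lmodType C) (ip : V -> V -> C) (u : nat -> V) (l : V) : Prop :=
  forall e : C, 0 < e -> exists N : nat, forall n, (N <= n)%N -> hnorm ip (u n - l) < e.

Definition hcauchy (V : lmodType C) (ip : V -> V -> C) (u : nat -> V) : Prop :=
  forall e : C, 0 < e -> exists N : nat, forall m n, (N <= m)%N -> (N <= n)%N ->
    hnorm ip (u m - u n) < e.

Record is_hilbert (V : lmodType C) (ip : V -> V -> C) : Prop := {
  hil_linl : forall (a : C) (x y z : V), ip (a *: x + y) z = a * ip x z + ip y z;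
  hil_sym  : forall x y : V, ip y x = (ip x y)^*;
  hil_pos  : forall x : V, 0 <= ip x x;
  hil_def  : forall x : V, ip x x = 0 -> x = 0;
  hil_complete : forall u : nat -> V, hcauchy ip u -> exists l, hconv ip u l
}.

(* phi is an element of the anti-dual V^*: a bounded conjugate-linear functional. *)
Definition is_antidual (V : lmodType C) (ip : V -> V -> C) (phi : V -> C) : Prop :=
  (forall (a : C) (x y : V), phi (a *: x + y) = a^* * phi x + phi y) /\
  (exists M : C, 0 <= M /\ forall x, `|phi x| <= M * hnorm ip x).

(* Partial operators T : V ⊃ dom T -> W, given by a function and a domain. *)
Definition is_subspace (V : lmodType C) (D : V -> Prop) : Prop :=
  D 0 /\ forall (a : C) x y, D x -> D y -> D (a *: x + y).

Definition linear_on (V W : lmodType C) (D : V -> Prop) (f : V -> W) : Prop :=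
  forall (a : C) x y, D x -> D y -> f (a *: x + y) = a *: f x + f y.

Definition linear_on_fun (V : lmodType C) (G : Type) (D : V -> Prop) (f : V -> G -> C) :
  Prop := forall (a : C) x y, D x -> D y -> forall g, f (a *: x + y) g = a * f x g + f y g.

Definition densely_defined (V W : lmodType C) (ipV : V -> V -> C)
  (D : V -> Prop) (T : V -> W) : Prop :=
  is_subspace D /\ linear_on D T /\
  forall x (e : C), 0 < e -> exists x', D x' /\ hnorm ipV (x - x') < e.

Definition closed_op (V W : lmodType C) (ipV : V -> V -> C) (ipW : W -> W -> C)
  (D : V -> Prop) (T : V -> W) : Prop :=
  forall (u : nat -> V) x y, (forall n, D (u n)) -> hconv ipV u x ->
    hconv ipW (fun n => T (u n)) y -> D x /\ T x = y.

(* A^* ⊂ -B, where A^* is the Hilbert-space adjoint of (A, domA):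
   y ∈ dom A^* with A^* y = w  iff  <A x, y>_W = <x, w>_V for all x ∈ dom A. *)
Definition adjoint_sub_neg (V W : lmodType C) (ipV : V -> V -> C) (ipW : W -> W -> C)
  (domA : V -> Prop) (A : V -> W) (domB : W -> Prop) (B : W -> V) : Prop :=
  forall (y : W) (w : V), (forall x, domA x -> ipW (A x) y = ipV x w) ->
    domB y /\ B y = - w.

Definition dom_calA (X Y : lmodType C) (domA : X -> Prop) (A : X -> Y)
  (domB : Y -> Prop) (z : X * X) : Prop :=
  domA z.1 /\ domA z.2 /\ domB (A z.1).

Definition calA (X Y : lmodType C) (A : X -> Y) (B : Y -> X) (z : X * X) : X * X :=
  (z.2, B (A z.1)).

Definition Zh_inner (X Y : lmodType C) (ipX : X -> X -> C) (ipY : Y -> Y -> C)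
  (A : X -> Y) (f g : X * X) : C :=
  ipY (A f.1) (A g.1) + ipX f.2 g.2.

Definition Gamma0 (X Y G1 G2 : Type) (A : X -> Y) (Lam1 : X -> G1) (Pi2 : Y -> G2)
  (z : X * X) : G1 * G2 := (Lam1 z.2, Pi2 (A z.1)).

Definition Gamma1 (X Y G1 G2 : Type) (A : X -> Y) (Pi1 : Y -> G1 -> C)
  (Lam2 : X -> G2 -> C) (z : X * X) : (G1 -> C) * (G2 -> C) :=
  (fun g => - Pi1 (A z.1) g, Lam2 z.2).

Definition pair_dual (G1 G2 : Type) (phi : (G1 -> C) * (G2 -> C)) (g : G1 * G2) : C :=
  phi.1 g.1 + phi.2 g.2.

Definition pair_primal (G1 G2 : Type) (g : G1 * G2) (phi : (G1 -> C) * (G2 -> C)) : C :=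
  (pair_dual phi g)^*.

End Hilbert.

(* Green's identity for calA is the sum of two instances of Green's identity for
   (A, B), one of them conjugated.  For surjectivity, Gamma needs Pi on A(dom A)
   rather than on dom B.  As A is closed and bounded below, its range is a complete
   subspace, so every y in dom B splits as y = A z + k with k orthogonal to ran A.
   Then k lies in ker A^* and hence, since A^* is contained in -B, in dom B with
   B k = 0.  Green's identity for (A, B) and the surjectivity of Lambda then force
   Pi k = 0, so Pi (A z) = Pi y. *)

From HB Require Import structures.
From mathcomp Require Import all_boot all_order all_algebra.
From mathcomp Require Import reals complex.
From mathcomp Require Import ring lra.
From mathcomp Require Import boolp classical_sets.
Set Implicit Arguments. Unset Strict Implicit. Unset Printing Implicit Defensive.
Import Order.TTheory GRing.Theory Num.Theory.
Local Open Scope ring_scope.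
Local Open Scope complex_scope.
Local Open Scope classical_set_scope.

Section ComplexRe.
Variable R : realType.
Implicit Types a b : R[i].

Lemma ReD a b : complex.Re (a + b) = complex.Re a + complex.Re b.
Proof. by case: a; case: b. Qed.

Lemma ReJ a : complex.Re a^*%C = complex.Re a.
Proof. by case: a. Qed.

Lemma ReMr (r : R) a : complex.Re (r%:C * a) = r * complex.Re a.
Proof. by case: a => x y /=; rewrite !mul0r subr0. Qed.

Lemma conjNi : (- 'i)^*%C = 'i :> R[i].
Proof. by rewrite /= oppr0 opprK. Qed.

Lemma gt0_real (e : R[i]) : 0 < e -> exists2 r : R, 0 < r & e = r%:C.
Proof. by case: e => a b; rewrite ltcE /= => /andP[/eqP -> ha]; exists a. Qed.

End ComplexRe.

Lemma le0_of_forall_le_mul (R : realFieldType) (x c : R) : 0 <= c ->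
  (forall d, 0 < d -> x <= d * c) -> x <= 0.
Proof.
move=> c0 hx; apply/ler_addgt0Pr => e ep; rewrite add0r.
have c1 : 0 < c + 1 by rewrite ltr_wpDl.
apply: (le_trans (hx _ (divr_gt0 ep c1))).
by rewrite mulrAC ler_pdivrMr // ler_pM2l // lerDl.
Qed.

Lemma invSn_lt_eventually (R : archiFieldType) (d : R) : 0 < d ->
  exists N, forall n, (N <= n)%N -> n.+1%:R^-1 < d.
Proof.
move=> dp; exists (Num.bound d^-1) => n hn.
rewrite invf_plt ?posrE ?ltr0Sn //.
apply: (lt_le_trans (archi_boundP _)); first by rewrite invr_ge0 ltW.
by rewrite ler_nat; apply: leqW.
Qed.

Section LinearOn.
Variables (R : realType) (V W : lmodType R[i]) (D : set V) (f : V -> W).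
Hypothesis hD : is_subspace D.

Lemma subspaceZ a x : D x -> D (a *: x).
Proof. by move=> Dx; have := hD.2 a _ _ Dx hD.1; rewrite addr0. Qed.

Lemma subspaceB x z : D x -> D z -> D (x - z).
Proof. by move=> Dx Dz; have := hD.2 (-1) _ _ Dz Dx; rewrite scaleN1r addrC. Qed.

Hypothesis hf : linear_on D f.

Lemma linear_on0 : f 0 = 0.
Proof.
have := hf 1 hD.1 hD.1; rewrite scaler0 addr0 scale1r => e.
by apply: (addrI (f 0)); rewrite addr0 -e.
Qed.

Lemma linear_onB x z : D x -> D z -> f (x - z) = f x - f z.
Proof.
by move=> Dx Dz; have := hf (-1) Dz Dx; rewrite !scaleN1r addrC => ->; rewrite addrC.
Qed.

Lemma linear_on_funB (G : Type) (h : V -> G -> R[i]) : linear_on_fun D h ->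
  forall x z g, D x -> D z -> h (x - z) g = h x g - h z g.
Proof.
move=> hh x z g Dx Dz; have := hh (-1) _ _ Dz Dx g.
by rewrite scaleN1r mulN1r addrC => ->; rewrite addrC.
Qed.

Lemma range_subspace : is_subspace [set f x | x in D].
Proof.
split; first by exists 0; [exact: hD.1 | exact: linear_on0].
by move=> a _ _ [x Dx <-] [z Dz <-]; exists (a *: x + z); [exact: hD.2 | exact: hf].
Qed.

End LinearOn.

Lemma subr_shift (R : pzRingType) (V : lmodType R) (a : R) (y x s : V) :
  y - ((- a) *: x + s) = (y - s) + a *: x.
Proof. by rewrite scaleNr opprD opprK addrCA addrC. Qed.

Section InnerProduct.
Variables (R : realType) (V : lmodType R[i]) (ip : V -> V -> R[i]).
Hypothesis hV : is_hilbert ip.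

Lemma ip0l z : ip 0 z = 0.
Proof.
have := hil_linl hV 1 0 0 z; rewrite scaler0 addr0 mul1r => e.
by apply: (addrI (ip 0 z)); rewrite addr0 -e.
Qed.

Lemma ipDl x y z : ip (x + y) z = ip x z + ip y z.
Proof. by have := hil_linl hV 1 x y z; rewrite scale1r mul1r. Qed.

Lemma ipZl a x z : ip (a *: x) z = a * ip x z.
Proof. by have := hil_linl hV a x 0 z; rewrite addr0 ip0l addr0. Qed.

Lemma ip0r z : ip z 0 = 0.
Proof. by rewrite (hil_sym hV) ip0l conjc0. Qed.

Lemma ipDr x y z : ip z (x + y) = ip z x + ip z y.
Proof. by rewrite (hil_sym hV) ipDl rmorphD /= -!(hil_sym hV). Qed.

Lemma ipZr a x z : ip z (a *: x) = a^*%C * ip z x.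
Proof. by rewrite (hil_sym hV) ipZl rmorphM /= -!(hil_sym hV). Qed.

Definition normsq x : R := complex.Re (ip x x).

Definition reip x y : R := complex.Re (ip x y).

Lemma ip_normsq x : ip x x = (normsq x)%:C.
Proof.
by have := hil_pos hV x; rewrite lecE /normsq; case: (ip x x) => a b /= /andP[/eqP ->].
Qed.

Lemma normsq_ge0 x : 0 <= normsq x.
Proof. by have := hil_pos hV x; rewrite ip_normsq ler0c. Qed.

Lemma normsq_eq0 x : normsq x = 0 -> x = 0.
Proof. by move=> e; apply: (hil_def hV); rewrite ip_normsq e. Qed.

Lemma reip0r x : reip x 0 = 0.
Proof. by rewrite /reip ip0r. Qed.

Lemma reipDl x y z : reip (x + y) z = reip x z + reip y z.
Proof. by rewrite /reip ipDl ReD. Qed.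

Lemma normsqDZ v w (a : R) :
  normsq (v + a%:C *: w) = normsq v + 2 * a * reip v w + a ^+ 2 * normsq w.
Proof.
rewrite /normsq /reip ipDl !ipDr !ipZl !ipZr conjc_real !ReD !ReMr.
by rewrite [ip w v](hil_sym hV) ReJ; ring.
Qed.

Lemma reip_sqr_le v w : reip v w ^+ 2 <= normsq v * normsq w.
Proof.
have [w0|nz] := eqVneq (normsq w) 0.
  by rewrite w0 mulr0 (normsq_eq0 w0) reip0r expr0n.
have wp : 0 < normsq w by rewrite lt_def nz normsq_ge0.
have := normsq_ge0 (v + (- reip v w / normsq w)%:C *: w); rewrite normsqDZ.
have -> : normsq v + 2 * (- reip v w / normsq w) * reip v w
            + (- reip v w / normsq w) ^+ 2 * normsq w
          = normsq v - reip v w ^+ 2 / normsq w by field.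
by rewrite subr_ge0 ler_pdivrMr.
Qed.

Lemma ip_eq0 v w : reip v w = 0 -> reip v ((- 'i) *: w) = 0 -> ip v w = 0.
Proof.
rewrite /reip ipZr conjNi mulrC ReiNIm => re /eqP; rewrite oppr_eq0 => /eqP im.
by rewrite (complexE (ip v w)) re im mulr0 addr0.
Qed.

Lemma hnorm_lt_sqrt x (d : R) : 0 < d ->
  (hnorm ip x < (Num.sqrt d)%:C) = (normsq x < d).
Proof.
move=> dp; rewrite /hnorm ip_normsq.
have -> : (Num.sqrt d)%:C = sqrtC d%:C.
  by rewrite -[in RHS](sqr_sqrtr (ltW dp)) rmorphXn sqrCK // ler0c sqrtr_ge0.
by rewrite ltr_sqrtC ?ltcR // nnegrE ler0c ?normsq_ge0 ?ltW.
Qed.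

Lemma hcauchy_normsq u :
  (forall d : R, 0 < d -> exists N, forall m n, (N <= m)%N -> (N <= n)%N ->
     normsq (u m - u n) < d) -> hcauchy ip u.
Proof.
move=> hu e /gt0_real[r rp ->]; have [N hN] := hu (r ^+ 2) (exprn_gt0 2 rp).
exists N => m n hm hn; have -> : r = Num.sqrt (r ^+ 2) by rewrite sqrtr_sqr ger0_norm ?ltW.
by rewrite hnorm_lt_sqrt ?exprn_gt0 // hN.
Qed.

Lemma hconv_normsq u l : hconv ip u l ->
  forall d : R, 0 < d -> exists N, forall n, (N <= n)%N -> normsq (u n - l) < d.
Proof.
move=> hu d dp; have [|N hN] := hu (Num.sqrt d)%:C; first by rewrite ltcR sqrtr_gt0.
by exists N => n hn; rewrite -hnorm_lt_sqrt // hN.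
Qed.

Lemma antidual0 : is_antidual ip (fun _ => 0).
Proof.
split; first by move=> *; rewrite mulr0 addr0.
by exists 0; split => // x; rewrite mul0r normr0.
Qed.

Lemma antidualN phi : is_antidual ip phi -> is_antidual ip (fun g => - phi g).
Proof.
case=> lin [M [M0 hM]]; split; first by move=> a x y; rewrite lin mulrN opprD.
by exists M; split => // x; rewrite normrN.
Qed.

Lemma antidual_ip g0 : is_antidual ip (fun g => ip g0 g).
Proof.
split; first by move=> a x y; rewrite ipDr ipZr.
exists (sqrtC (2 * normsq g0)%:C).
split; first by rewrite sqrtC_ge0 ler0c mulr_ge0 ?normsq_ge0.
move=> g; set w := ip g0 g.
(* Cauchy-Schwarz for the real and the imaginary part of w separately. *)
have re : complex.Re w ^+ 2 <= normsq g0 * normsq g by exact: reip_sqr_le.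
have im : complex.Im w ^+ 2 <= normsq g0 * normsq g.
  have := reip_sqr_le g0 ((- 'i) *: g).
  by rewrite /reip ipZr conjNi mulrC ReiNIm sqrrN /normsq ipZl ipZr conjNi
    mulrA mulNr -expr2 sqr_i opprK mul1r.
have wle : `|w| ^+ 2 <= (2 * normsq g0 * normsq g)%:C by rewrite -add_Re2_Im2 lecR; lra.
rewrite /hnorm ip_normsq -sqrtCM ?nnegrE ?ler0c ?mulr_ge0 ?normsq_ge0 // -rmorphM.
rewrite -(sqrCK (normr_ge0 w)) ler_sqrtC // nnegrE ?exprn_ge0 ?normr_ge0 //.
by rewrite ler0c !mulr_ge0 ?normsq_ge0.
Qed.

End InnerProduct.

Definition complete_set (R : realType) (V : lmodType R[i]) (ip : V -> V -> R[i])
  (S : set V) : Prop :=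
  forall u, (forall n, S (u n)) -> hcauchy ip u -> exists2 l, S l & hconv ip u l.

Section Projection.
Variables (R : realType) (V : lmodType R[i]) (ip : V -> V -> R[i]).
Hypothesis hV : is_hilbert ip.
Variable S : set V.
Hypotheses (hS : is_subspace S) (hScomplete : complete_set ip S).
Variable y : V.

Definition sqdist := inf [set normsq ip (y - s) | s in S].

Let sqdist_has_inf : has_inf [set normsq ip (y - s) | s in S].
Proof.
split; first by exists (normsq ip (y - 0)), 0; [exact: hS.1|].
by exists 0 => _ [s _ <-]; exact: normsq_ge0.
Qed.

Lemma sqdist_le s : S s -> sqdist <= normsq ip (y - s).
Proof. by move=> Ss; apply: (ge_inf sqdist_has_inf.2); exists s. Qed.

Lemma sqdist_approx e : 0 < e -> exists2 s, S s & normsq ip (y - s) < sqdist + e.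
Proof. by move=> ep; have [_ [s Ss <-]] := inf_adherent ep sqdist_has_inf; exists s. Qed.

Lemma near_min_orth s w e : S s -> S w -> normsq ip (y - s) <= sqdist + e ->
  reip ip (y - s) w ^+ 2 <= e * normsq ip w.
Proof.
move=> Ss Sw hs; set q := reip ip (y - s) w; set a := normsq ip w.
have [a0|anz] := eqVneq a 0.
  by rewrite /q (normsq_eq0 hV a0) reip0r // a0 mulr0 expr2 mulr0.
have ap : 0 < a by rewrite lt_def anz normsq_ge0.
pose mu := - q / a.
have := sqdist_le (hS.2 (- mu)%:C _ _ Sw Ss).
rewrite rmorphN subr_shift normsqDZ // -/q -/a.
have -> : normsq ip (y - s) + 2 * mu * q + mu ^+ 2 * a = normsq ip (y - s) - q ^+ 2 / a.
  by rewrite /mu; field; rewrite gt_eqF.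
rewrite -ler_pdivrMr //; lra.
Qed.

Lemma near_min_close s1 s2 e1 e2 : S s1 -> S s2 ->
  normsq ip (y - s1) <= sqdist + e1 -> normsq ip (y - s2) <= sqdist + e2 ->
  normsq ip (s1 - s2) <= 2 * e1 + 2 * e2.
Proof.
move=> S1 S2 h1 h2; set x := s1 - s2.
have Sx : S x by exact: subspaceB.
have hmid := sqdist_le (hS.2 (- (2^-1))%:C _ _ Sx S1).
rewrite rmorphN subr_shift normsqDZ // in hmid.
have e2x : y - s2 = (y - s1) + 1%:C *: x by rewrite rmorph1 scale1r addrA subrK.
rewrite e2x normsqDZ // in h2.
have := normsq_ge0 hV x; move: hmid h1 h2.
rewrite divff ?pnatr_eq0 // mul1r expr1n mul1r mulr1 expr2 (_ : 2^-1 * 2^-1 = 4^-1 :> R); last by field.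
by lra.
Qed.

Lemma orthogonal_projection : exists2 t, S t & forall w, S w -> ip (y - t) w = 0.
Proof.
have [u Su hu] : exists2 u : nat -> V, forall n, S (u n) &
    forall n, normsq ip (y - u n) <= sqdist + n.+1%:R^-1.
  have /choice[u hu] : forall n, exists u, S u /\ normsq ip (y - u) <= sqdist + n.+1%:R^-1.
    move=> n; have [|s Ss /ltW] := sqdist_approx (e := n.+1%:R^-1); last by exists s.
    by rewrite invr_gt0.
  by exists u => n; have [] := hu n.
have u_cauchy : hcauchy ip u.
  apply: hcauchy_normsq => // d dp.
  have [|N hN] := invSn_lt_eventually (d := d / 4); first by rewrite divr_gt0.
  exists N => m n hm hn; apply: (le_lt_trans (near_min_close (Su m) (Su n) (hu m) (hu n))).
  move: (hN m hm) (hN n hn); set a := m.+1%:R^-1; set b := n.+1%:R^-1; lra.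
have [t St ut] := hScomplete Su u_cauchy.
have re_orth w : S w -> reip ip (y - t) w = 0.
  (* reip (y - t) w = reip (y - u n) w + reip (u n - t) w, where the first term is
     small by near-minimality of u n and the second by Cauchy-Schwarz. *)
  move=> Sw; set a := normsq ip w.
  suff q0 : reip ip (y - t) w ^+ 2 <= 0 by apply/eqP; rewrite -sqrf_eq0 eq_le q0 sqr_ge0.
  apply: (le0_of_forall_le_mul (c := 4 * a)); first by rewrite mulr_ge0 ?normsq_ge0.
  move=> d dp; have [N1 hN1] := invSn_lt_eventually dp.
  have [N2 hN2] := hconv_normsq hV ut dp.
  pose n := maxn N1 N2.
  have yt : y - t = (y - u n) + (u n - t) by rewrite addrA subrK.
  have h1 := near_min_orth (Su n) Sw (hu n).
  have h2 := reip_sqr_le hV (u n - t) w.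
  have h3 := hN1 n (leq_maxl _ _); have h4 := hN2 n (leq_maxr _ _).
  rewrite yt reipDl //; move: h1 h2 h3 h4 (normsq_ge0 hV w).
  set qn := reip ip _ w; set qd := reip ip _ w; rewrite -/a.
  set en := n.+1%:R^-1; set Nd := normsq ip (u n - t) => h1 h2 h3 h4 a0.
  have : 0 <= (d - en) * a by rewrite mulr_ge0 // subr_ge0 ltW.
  have : 0 <= (d - Nd) * a by rewrite mulr_ge0 // subr_ge0 ltW.
  have := sqr_ge0 (qn - qd); nra.
exists t => // w Sw; apply: (ip_eq0 hV); apply: re_orth => //.
exact: subspaceZ.
Qed.

End Projection.

Section ClosedRange.
Variables (R : realType) (X Y : lmodType R[i]) (ipX : X -> X -> R[i]) (ipY : Y -> Y -> R[i]).
Hypotheses (hX : is_hilbert ipX) (hY : is_hilbert ipY).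
Variables (domA : set X) (A : X -> Y) (c : R[i]).
Hypotheses (hAsub : is_subspace domA) (hAlin : linear_on domA A)
  (hAclosed : closed_op ipX ipY domA A) (hc : 0 < c)
  (hAbelow : forall x, domA x -> c * hnorm ipX x <= hnorm ipY (A x)).

Lemma range_complete : complete_set ipY [set A x | x in domA].
Proof.
move=> u Su u_cauchy.
have /choice[z hz] : forall n, exists z, domA z /\ A z = u n.
  by move=> n; have [z ? ?] := Su n; exists z.
have z_cauchy : hcauchy ipX z.
  move=> e ep; have [N hN] := u_cauchy (c * e) (mulr_gt0 hc ep).
  exists N => m n hm hn; have [[dm Am] [dn An]] := (hz m, hz n).
  rewrite -(ltr_pM2l hc); apply: (le_lt_trans (hAbelow (subspaceB hAsub dm dn))).
  by rewrite (linear_onB hAlin) // Am An hN.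
have [l ul] := hil_complete hY u_cauchy.
have [x zx] := hil_complete hX z_cauchy.
have Azl : hconv ipY (fun n => A (z n)) l.
  by rewrite (_ : (fun n => A (z n)) = u) //; apply: funext => n; case: (hz n).
have [dx Axl] := hAclosed (fun n => (hz n).1) zx Azl.
by exists l => //; exists x.
Qed.

End ClosedRange.

Section BoundaryTriplet.
Variables (R : realType) (X Y G1 G2 : lmodType R[i]).
Variables (ipX : X -> X -> R[i]) (ipY : Y -> Y -> R[i]) (ipG1 : G1 -> G1 -> R[i])
  (ipG2 : G2 -> G2 -> R[i]).
Hypotheses (hX : is_hilbert ipX) (hY : is_hilbert ipY) (hG2 : is_hilbert ipG2).
Variables (domA : set X) (A : X -> Y) (domB : set Y) (B : Y -> X).
Variables (Lam1 : X -> G1) (Lam2 : X -> G2 -> R[i]) (Pi1 : Y -> G1 -> R[i]) (Pi2 : Y -> G2).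
Hypotheses (hLamsurj : forall (g1 : G1) (phi2 : G2 -> R[i]), is_antidual ipG2 phi2 ->
     exists x, domA x /\ Lam1 x = g1 /\ Lam2 x = phi2)
  (hgreen : forall y x, domB y -> domA x ->
     - ipX (B y) x - ipY y (A x) = Pi1 y (Lam1 x) - (Lam2 x (Pi2 y))^*%C).

Lemma Pi_eq0_orth_range k : domB k -> B k = 0 -> (forall x, domA x -> ipY (A x) k = 0) ->
  (forall g, Pi1 k g = 0) /\ Pi2 k = 0.
Proof.
move=> dk Bk k_orth.
have Pi1_Lam1 x : domA x -> Pi1 k (Lam1 x) = (Lam2 x (Pi2 k))^*%C.
  move=> dx; apply/eqP; rewrite -subr_eq0 -hgreen // Bk (ip0l hX).
  by rewrite (hil_sym hY) k_orth // conjc0 oppr0 addr0.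
have Pi1k g : Pi1 k g = 0.
  have [x [dx [L1 L2]]] := hLamsurj g (antidual0 ipG2).
  by rewrite -L1 Pi1_Lam1 // L2 conjc0.
split=> //; apply: (hil_def hG2).
have [x [dx [L1 L2]]] := hLamsurj 0 (antidual_ip hG2 (Pi2 k)).
by have := Pi1_Lam1 _ dx; rewrite L1 L2 Pi1k => /(congr1 (@conjc _)); rewrite conjc0 conjcK.
Qed.

Lemma calA_green f g : dom_calA domA A domB f -> dom_calA domA A domB g ->
  Zh_inner ipX ipY A (calA A B f) g + Zh_inner ipX ipY A f (calA A B g) =
  pair_dual (Gamma1 A Pi1 Lam2 f) (Gamma0 A Lam1 Pi2 g)
  + pair_primal (Gamma0 A Lam1 Pi2 f) (Gamma1 A Pi1 Lam2 g).
Proof.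
case: f g => [z1 z2] [w1 w2] [dz1 [dz2 dBz]] [dw1 [dw2 dBw]].
rewrite /Zh_inner /calA /pair_dual /pair_primal /Gamma0 /Gamma1 /=.
have H1 := hgreen dBz dw2.
have H2 := congr1 (@conjc _) (hgreen dBw dz2).
rewrite !rmorphB !rmorphN /= !conjcK -!(hil_sym hX) -!(hil_sym hY) in H2.
rewrite !rmorphD !rmorphN /=.
apply/eqP; rewrite -subr_eq0; apply/eqP; move: H1 H2.
set a1 := ipX (B (A z1)) w2; set a2 := ipY (A z1) (A w2).
set a3 := ipX z2 (B (A w1)); set a4 := ipY (A z2) (A w1).
set b1 := Pi1 (A z1) (Lam1 w2); set b2 := Lam2 w2 (Pi2 (A z1)).
set b3 := Pi1 (A w1) (Lam1 z2); set b4 := Lam2 z2 (Pi2 (A w1)).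
move=> H1 H2.
have -> : a4 + a1 + (a2 + a3) - (- b1 + b4 + (- b3^*%C + b2^*%C))
   = - ((- a1 - a2) - (b1 - b2^*%C)) - ((- a3 - a4) - (b3^*%C - b4)) by ring.
by rewrite H1 H2 !subrr; ring.
Qed.

Variable c : R[i].
Hypotheses (hAsub : is_subspace domA) (hAlin : linear_on domA A)
  (hAclosed : closed_op ipX ipY domA A) (hc : 0 < c)
  (hAbelow : forall x, domA x -> c * hnorm ipX x <= hnorm ipY (A x))
  (hBsub : is_subspace domB) (hAB : adjoint_sub_neg ipX ipY domA A domB B)
  (hPi1 : linear_on_fun domB Pi1) (hPi2 : linear_on domB Pi2)
  (hPisurj : forall (phi1 : G1 -> R[i]) (g2 : G2), is_antidual ipG1 phi1 ->
     exists y, domB y /\ Pi1 y = phi1 /\ Pi2 y = g2).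

Lemma Pi_range_surj phi1 g2 : is_antidual ipG1 phi1 ->
  exists z, [/\ domA z, domB (A z), Pi1 (A z) = phi1 & Pi2 (A z) = g2].
Proof.
move=> hphi1; have [y [dy [Py1 Py2]]] := hPisurj g2 hphi1.
have [_ [z dz <-] y_orth] := orthogonal_projection hY (range_subspace hAsub hAlin)
  (range_complete hX hY hAsub hAlin hAclosed hc hAbelow) y.
set k := y - A z.
have k_orth x : domA x -> ipY (A x) k = 0.
  by move=> dx; rewrite (hil_sym hY) y_orth ?conjc0 //; exists x.
have [dk Bk] := hAB (w := 0) (fun x dx => etrans (k_orth x dx) (esym (ip0r hX x))).
rewrite oppr0 in Bk; have [Pi1k Pi2k] := Pi_eq0_orth_range dk Bk k_orth.
have Az : A z = y - k by rewrite /k opprB addrC subrK.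
have dAz : domB (A z) by rewrite Az; exact: subspaceB.
exists z; split=> //; last by rewrite Az (linear_onB hPi2) // Pi2k subr0.
by apply: funext => g; rewrite Az (linear_on_funB hPi1) // Pi1k subr0 Py1.
Qed.

End BoundaryTriplet.

Unset Implicit Arguments.
Set Strict Implicit.

Theorem theorem3p3 (R : realType)
  (X Y G1 G2 : lmodType R[i])
  (ipX : X -> X -> R[i]) (ipY : Y -> Y -> R[i])
  (ipG1 : G1 -> G1 -> R[i]) (ipG2 : G2 -> G2 -> R[i])
  (hX : is_hilbert ipX) (hY : is_hilbert ipY)
  (hG1 : is_hilbert ipG1) (hG2 : is_hilbert ipG2)
  (* A : X ⊃ dom A -> Y closed, densely defined, bounded below *)
  (domA : X -> Prop) (A : X -> Y)
  (hAdense : densely_defined ipX domA A) (hAclosed : closed_op ipX ipY domA A)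
  (c : R[i]) (hc : 0 < c)
  (hAbelow : forall x, domA x -> c * hnorm ipX x <= hnorm ipY (A x))
  (* B : Y ⊃ dom B -> X closed, densely defined, A-adjoint ⊂ -B *)
  (domB : Y -> Prop) (B : Y -> X)
  (hBdense : densely_defined ipY domB B) (hBclosed : closed_op ipY ipX domB B)
  (hAB : adjoint_sub_neg ipX ipY domA A domB B)
  (* boundary triplet (Lambda, Pi) for the dual pair (A-adjoint, -B-adjoint) *)
  (Lam1 : X -> G1) (Lam2 : X -> G2 -> R[i])
  (Pi1 : Y -> G1 -> R[i]) (Pi2 : Y -> G2)
  (hLam1 : linear_on domA Lam1) (hLam2 : linear_on_fun domA Lam2)
  (hLam2d : forall x, domA x -> is_antidual ipG2 (Lam2 x))
  (hPi1 : linear_on_fun domB Pi1) (hPi2 : linear_on domB Pi2)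
  (hPi1d : forall y, domB y -> is_antidual ipG1 (Pi1 y))
  (hLamsurj : forall (g1 : G1) (phi2 : G2 -> R[i]), is_antidual ipG2 phi2 ->
     exists x, domA x /\ Lam1 x = g1 /\ Lam2 x = phi2)
  (hPisurj : forall (phi1 : G1 -> R[i]) (g2 : G2), is_antidual ipG1 phi1 ->
     exists y, domB y /\ Pi1 y = phi1 /\ Pi2 y = g2)
  (hgreen : forall y x, domB y -> domA x ->
     - ipX (B y) x - ipY y (A x) = Pi1 y (Lam1 x) - (Lam2 x (Pi2 y))^*) :
  (* (G, Gamma0, Gamma1) is a boundary triplet for calA *)
  (forall (g : G1 * G2) (phi : (G1 -> R[i]) * (G2 -> R[i])),
     is_antidual ipG1 phi.1 -> is_antidual ipG2 phi.2 ->
     exists f : X * X, dom_calA domA A domB f /\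
       Gamma0 A Lam1 Pi2 f = g /\ Gamma1 A Pi1 Lam2 f = phi) /\
  (forall f g : X * X, dom_calA domA A domB f -> dom_calA domA A domB g ->
     Zh_inner ipX ipY A (calA A B f) g + Zh_inner ipX ipY A f (calA A B g) =
     pair_dual (Gamma1 A Pi1 Lam2 f) (Gamma0 A Lam1 Pi2 g)
     + pair_primal (Gamma0 A Lam1 Pi2 f) (Gamma1 A Pi1 Lam2 g)).
Proof.
have [hAsub [hAlin _]] := hAdense.
split; last exact: calA_green.
move=> [g1 g2] [phi1 phi2] /= h1 h2.
have [z2 [dz2 [L1 L2]]] := hLamsurj g1 phi2 h2.
have [z1 [dz1 dAz1 P1 P2]] := Pi_range_surj hX hY hG2 hLamsurj hgreen hAsub hAlin hAclosed hc
  hAbelow hBdense.1 hAB hPi1 hPi2 hPisurj g2 (antidualN h1).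
exists (z1, z2); split=> //.
rewrite /Gamma0 /Gamma1 /= L1 L2 P1 P2; split=> //.
by congr (_, _); apply: funext => g; rewrite opprK.
Qed.
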